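(* Let $\varepsilon=1+\sqrt2$, $K=\mathbb Q(\sqrt2)$, $\sigma$ its nontrivial Galois automorphism, and let $$\Gamma(2,5)=\left\{\begin{pmatrix}x_0+x_1\sqrt2&\sqrt5(x_2+x_3\sqrt2)\\ \sqrt5(x_2-x_3\sqrt2)&x_0-x_1\sqrt2\end{pmatrix}\in\mathrm{SL}_2(\mathbb R):\ x_i\in\mathbb Z\right\},\qquad H=\left\langle\begin{pmatrix}\varepsilon^2&0\\0&\varepsilon^{-2}\end{pmatrix}\right\rangle.$$ For $\gamma\in\Gamma(2,5)$ put $z_1(\gamma)=x_0+x_1\sqrt2$, $z_2(\gamma)=x_2+x_3\sqrt2\in\mathcal O_K$. Let $n\in\mathbb N$. Consider the set of double cosets $[\gamma]=H\gamma H$ whose elements $\gamma=\begin{pmatrix}a&b\\c&d\end{pmatrix}$ have all four entries nonzero and of the same sign (i.e. $\delta_1(\gamma)=\delta_2(\gamma)=0$) and satisfy $bc=5n$, modulo the identification $[\gamma]\sim[-\gamma]$. Then the map $$\psi:[\gamma]\longmapsto(|z_1(\gamma)|,\ |z_2(\gamma)|)\in D_K(5n+1)\times D_K(n)$$ is well defined, two-to-one, and surjective.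
   Context: For $z\in\mathcal O_K$, $|z|$ denotes the real absolute value of $z\in\mathbb R$ (so $|z|=\pm z$). For $m\in\mathbb N$, $D_K(m)$ is the set of totally positive $z\in\mathcal O_K$ (i.e. $z>0$ and $\sigma(z)>0$) with $z\,\sigma(z)=m$, modulo the equivalence $z\sim z'$ iff $z=\varepsilon^{2k}z'$ for some $k\in\mathbb Z$. *)

From mathcomp Require Import all_boot all_order all_algebra.
From mathcomp Require Import reals.
Set Implicit Arguments. Unset Strict Implicit. Unset Printing Implicit Defensive.
Import Order.TTheory GRing.Theory Num.Theory.
Local Open Scope ring_scope.

(* O_K = Z[sqrt 2], an element x0 + x1 sqrt2 is represented by the pair (x0, x1). *)
Definition OK := (int * int)%type.

Definition sigmaK (z : OK) : OK := (z.1, - z.2).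

Section Defs.
Variable R : realType.

Definition s2 : R := Num.sqrt 2.
Definition s5 : R := Num.sqrt 5.

Definition emb (z : OK) : R := z.1%:~R + z.2%:~R * s2.

Definition epsR : R := 1 + s2.

Definition absK (z : OK) : OK := if 0 <= emb z then z else (- z.1, - z.2).

Definition totpos (z : OK) : Prop := 0 < emb z /\ 0 < emb (sigmaK z).

(* z is a representative of an element of D_K(m) *)
Definition inD (m : nat) (z : OK) : Prop :=
  totpos z /\ emb z * emb (sigmaK z) = m%:R.

(* equivalence defining D_K(m): z ~ z' iff z = eps^(2k) z' for some k in Z *)
Definition eqD (z z' : OK) : Prop := exists k : int, emb z = epsR ^ (2 * k) * emb z'.

Definition eqDD (p q : OK * OK) : Prop := eqD p.1 q.1 /\ eqD p.2 q.2.

Definition mx2 (a b c d : R) : 'M[R]_2 :=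
  \matrix_(i < 2, j < 2)
    if i == ord0 then (if j == ord0 then a else b) else (if j == ord0 then c else d).

(* an integer vector x = ((x0,x1),(x2,x3)) = (z1, z2) and the associated matrix
   [ x0+x1 s2 , s5 (x2 + x3 s2) ; s5 (x2 - x3 s2) , x0 - x1 s2 ] *)
Definition gam (x : OK * OK) : 'M[R]_2 :=
  mx2 (emb x.1) (s5 * emb x.2) (s5 * emb (sigmaK x.2)) (emb (sigmaK x.1)).

Definition inGamma (x : OK * OK) : Prop := \det (gam x) = 1.

Definition hmat (j : int) : 'M[R]_2 := mx2 (epsR ^ (2 * j)) 0 0 (epsR ^ (- (2 * j))).

Definition admissible (n : nat) (x : OK * OK) : Prop :=
  let g := gam x in
  let a := g ord0 ord0 in let b := g ord0 ord_max in
  let c := g ord_max ord0 in let d := g ord_max ord_max in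
  [/\ inGamma x,
      (0 < a /\ 0 < b /\ 0 < c /\ 0 < d) \/ (a < 0 /\ b < 0 /\ c < 0 /\ d < 0)
    & b * c = (5 * n)%:R].

Definition equivG (x y : OK * OK) : Prop :=
  exists (j k : int) (s : bool), gam y = (-1) ^+ s *: (hmat j *m gam x *m hmat k).

Definition psi (x : OK * OK) : OK * OK := (absK x.1, absK x.2).

End Defs.

(* A class [H gamma H] is recorded by z1 = z1(gamma) and z2 = z2(gamma) up to
   the action of H x H and of -1: multiplying by diag(eps^2, eps^-2)^j on the
   left and diag(eps^2, eps^-2)^k on the right sends (z1, z2) to
   (eps^(2(j+k)) z1, eps^(2(j-k)) z2), so the exponent pairs that occur are
   exactly the pairs (2a, 2b) with a = b mod 2.  The determinant and the
   condition bc = 5n say N(z1) = 5n+1 and N(z2) = n, and the sign condition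
   says that z1 and z2 are totally positive up to a common sign.  Hence the
   classes over (u, v) in D_K(5n+1) x D_K(n) are told apart only by the parity
   of a - b: they are the classes of (u, v) and (u, eps^2 v). *)

From Pilot Require Import Defs.
From mathcomp Require Import all_boot all_order all_algebra.
From mathcomp Require Import reals.
From mathcomp Require Import ring lra zify.
Import Order.TTheory GRing.Theory Num.Theory.
Set Implicit Arguments. Unset Strict Implicit. Unset Printing Implicit Defensive.
Local Open Scope ring_scope.

Lemma int_even_or_odd (d : int) : exists m : int, d = 2 * m \/ d = 2 * m + 1.
Proof.
exists (d %/ 2)%Z; have := divz_eq d 2.
have := modz_ge0 d (isT : (2 : int) != 0); have := ltz_pmod d (isT : (0 : int) < 2).
lia.
Qed.

Section Mx2.
Variable R : realType.

Lemma mx2_inj (a b c d a' b' c' d' : R) :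
  mx2 a b c d = mx2 a' b' c' d' -> [/\ a = a', b = b', c = c' & d = d'].
Proof.
move=> /matrixP h; have := h ord0 ord0; have := h ord0 ord_max.
by have := h ord_max ord0; have := h ord_max ord_max; rewrite !mxE.
Qed.

Lemma det_mx2 (a b c d : R) : \det (mx2 a b c d) = a * d - b * c.
Proof.
rewrite (expand_det_row _ ord0) !big_ord_recl big_ord0 /cofactor !det_mx11 !mxE /=.
rewrite expr0 expr1; ring.
Qed.

Lemma mulmx_mx2 (a b c d a' b' c' d' : R) :
  mx2 a b c d *m mx2 a' b' c' d' =
  mx2 (a * a' + b * c') (a * b' + b * d') (c * a' + d * c') (c * b' + d * d').
Proof.
apply/matrixP => i j; rewrite !mxE !big_ord_recl big_ord0 !mxE /=.
by case: i => [[|[|//]] ?]; case: j => [[|[|//]] ?] /=; ring.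
Qed.

Lemma scale_mx2 (t a b c d : R) :
  t *: mx2 a b c d = mx2 (t * a) (t * b) (t * c) (t * d).
Proof.
apply/matrixP => i j; rewrite !mxE.
by case: i => [[|[|//]] ?]; case: j => [[|[|//]] ?].
Qed.

End Mx2.

Section Units.
Variable R : realType.
Local Notation s2 := (s2 R).
Local Notation s5 := (s5 R).
Local Notation eps := (epsR R).
Local Notation emb := (emb R).

Lemma s2_sqr : s2 ^+ 2 = 2. Proof. by rewrite sqr_sqrtr ?ler0n. Qed.
Lemma s5_sqr : s5 ^+ 2 = 5. Proof. by rewrite sqr_sqrtr ?ler0n. Qed.
Lemma s5_gt0 : 0 < s5. Proof. by rewrite sqrtr_gt0 ltr0n. Qed.

Lemma eps_gt1 : 1 < eps.
Proof. by rewrite /epsR ltrDl sqrtr_gt0 ltr0n. Qed.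

Lemma eps_neq0 : eps != 0.
Proof. by rewrite gt_eqF // (lt_trans ltr01 eps_gt1). Qed.

Lemma expr_eps_gt0 (m : int) : 0 < eps ^ m.
Proof. exact/exprz_gt0/(lt_trans ltr01 eps_gt1). Qed.

Lemma expr_epsD (m k : int) : eps ^ (m + k) = eps ^ m * eps ^ k.
Proof. exact: expfzDr eps_neq0. Qed.

Lemma expr_epsNK (m : int) : eps ^ (- m) * eps ^ m = 1.
Proof. by rewrite -expr_epsD addNr. Qed.

Lemma sign_expr_eps_inj (s t : bool) (m k : int) :
  (-1) ^+ s * eps ^ m = (-1) ^+ t * eps ^ k -> s = t /\ m = k.
Proof.
have := expr_eps_gt0 m; have := expr_eps_gt0 k.
have eps_inj := ieexprIz (lt_trans ltr01 eps_gt1) (negbT (gt_eqF eps_gt1)).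
case: s; case: t; rewrite ?expr0 ?expr1 ?mul1r ?mulN1r => hk hm.
- by move/oppr_inj/eps_inj.
- by move=> h; have := hk; rewrite -h oppr_gt0 ltNge (ltW hm).
- by move=> h; have := hm; rewrite h oppr_gt0 ltNge (ltW hk).
- by move/eps_inj.
Qed.

Definition normK (z : OK) : R := emb z * emb (sigmaK z).

Definition signed (s : bool) (z : OK) : Prop :=
  0 < (-1) ^+ s * emb z /\ 0 < (-1) ^+ s * emb (sigmaK z).

(* [z' = (-1)^s eps^m z], read in both real embeddings; as sigma(eps) = -eps^-1,
   this describes multiplication by a unit only for even [m]. *)
Definition scaled_by (s : bool) (m : int) (z' z : OK) : Prop :=
  emb z' = (-1) ^+ s * eps ^ m * emb z /\
  emb (sigmaK z') = (-1) ^+ s * eps ^ (- m) * emb (sigmaK z).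

Lemma scaled_by_refl (z : OK) : scaled_by false 0 z z.
Proof. by rewrite /scaled_by oppr0 expr0 expr0z !mul1r. Qed.

Lemma sign_eps_cancel (s : bool) (m k : int) (x : R) : m + k = 0 ->
  (-1) ^+ s * eps ^ m * ((-1) ^+ s * eps ^ k * x) = x.
Proof.
move=> mk0; transitivity ((-1) ^+ s ^+ 2 * eps ^ (m + k) * x).
  by rewrite expr_epsD; ring.
by rewrite sqrr_sign mk0 expr0z !mul1r.
Qed.

Lemma scaled_by_sym (s : bool) (m : int) (z' z : OK) :
  scaled_by s m z' z -> scaled_by s (- m) z z'.
Proof.
rewrite /scaled_by opprK => -[-> ->].
by rewrite !sign_eps_cancel ?addNr ?addrN.
Qed.

Lemma scaled_by_trans (s t : bool) (m k : int) (z'' z' z : OK) :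
  scaled_by s m z'' z' -> scaled_by t k z' z -> scaled_by (s (+) t) (m + k) z'' z.
Proof.
rewrite /scaled_by signr_addb opprD !expr_epsD => -[-> ->] [-> ->]; split; ring.
Qed.

Lemma scaled_by_unique (s t : bool) (m k : int) (z' z : OK) : emb z != 0 ->
  scaled_by s m z' z -> scaled_by t k z' z -> s = t /\ m = k.
Proof.
move=> z_neq0 [h _] [h' _]; apply: sign_expr_eps_inj.
by apply: (mulIf z_neq0); rewrite -h -h'.
Qed.

Lemma scaled_by_normK (s : bool) (m : int) (z' z : OK) :
  scaled_by s m z' z -> normK z' = normK z.
Proof.
rewrite /normK => -[-> ->].
transitivity ((-1) ^+ s ^+ 2 * eps ^ (m + - m) * (emb z * emb (sigmaK z))).
  by rewrite expr_epsD; ring.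
by rewrite sqrr_sign addrN expr0z !mul1r.
Qed.

Lemma scaled_by_of_emb (s : bool) (m : int) (z' z : OK) :
  normK z' = normK z -> emb z != 0 ->
  emb z' = (-1) ^+ s * eps ^ m * emb z -> scaled_by s m z' z.
Proof.
move=> hN z_neq0 hz; split=> //.
have hc : (-1) ^+ s * eps ^ m * emb (sigmaK z') = emb (sigmaK z).
  by apply: (mulfI z_neq0); rewrite -[RHS]/(normK z) -hN /normK hz; ring.
by rewrite -hc sign_eps_cancel ?addNr.
Qed.

Lemma signed_false (z : OK) : signed false z <-> totpos R z.
Proof. by rewrite /signed /totpos expr0 !mul1r. Qed.

Lemma emb_opp (z : OK) : emb (- z.1, - z.2) = - emb z.
Proof. by rewrite /Defs.emb /= !mulrNz; ring. Qed.

Lemma emb_sigma_opp (z : OK) : emb (sigmaK (- z.1, - z.2)) = - emb (sigmaK z).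
Proof. by rewrite /Defs.emb /= !mulrNz; ring. Qed.

Lemma absK_emb (z : OK) : emb (absK R z) = `|emb z|.
Proof.
rewrite /absK; case: ifP => [/ger0_norm -> //|/negbT].
by rewrite -ltNge => /ltr0_norm ->; rewrite emb_opp.
Qed.

Lemma absK_signed (s : bool) (z : OK) : signed s z -> scaled_by s 0 (absK R z) z.
Proof.
rewrite /scaled_by oppr0 expr0z !mulr1 /absK.
case: s => -[h1 h2]; rewrite ?expr0 ?expr1 ?mul1r ?mulN1r in h1 h2 *.
  by rewrite ifF ?emb_opp ?emb_sigma_opp // leNgt -oppr_gt0 h1.
by rewrite ifT ?(ltW h1).
Qed.

Lemma inD_absK (s : bool) (m : nat) (z : OK) :
  signed s z -> normK z = m%:R -> inD R m (absK R z).
Proof.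
move=> zs hN; have zabs := absK_signed zs.
split; last by rewrite -hN -(scaled_by_normK zabs).
by rewrite /totpos; case: zabs => -> ->; rewrite oppr0 expr0z !mulr1.
Qed.

Lemma eqD_refl (z : OK) : eqD R z z.
Proof. by exists 0; rewrite mulr0 expr0z mul1r. Qed.

Lemma scaled_by_eqD (m : int) (z' z : OK) : scaled_by false (2 * m) z' z -> eqD R z' z.
Proof. by case=> h _; exists m; rewrite h expr0 mul1r. Qed.

Lemma eqD_scaled_by (z' z : OK) : eqD R z' z -> normK z' = normK z -> emb z != 0 ->
  exists m, scaled_by false (2 * m) z' z.
Proof.
by case=> m hm hN z_neq0; exists m; apply: scaled_by_of_emb; rewrite // expr0 mul1r.
Qed.

Lemma scaled_by_eqD_absK (s : bool) (m : int) (z' z : OK) :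
  scaled_by s (2 * m) z' z -> eqD R (absK R z') (absK R z).
Proof.
case=> h _; exists m.
by rewrite !absK_emb h !normrM normr_sign mul1r (gtr0_norm (expr_eps_gt0 _)).
Qed.

Lemma eqD_absK_scaled_by (s : bool) (z' z : OK) : signed s z' ->
  eqD R (absK R z') z -> normK z' = normK z -> emb z != 0 ->
  exists m, scaled_by s (2 * m) z' z.
Proof.
move=> zs hD hN z_neq0; have zabs := absK_signed zs.
have [m hm] := eqD_scaled_by hD (etrans (scaled_by_normK zabs) hN) z_neq0.
by exists m; have := scaled_by_trans (scaled_by_sym zabs) hm; rewrite addbF oppr0 add0r.
Qed.

Lemma absK_id (z : OK) : totpos R z -> absK R z = z.
Proof. by case=> h _; rewrite /absK ifT ?ltW. Qed.

Lemma inD_scaled_by (m : int) (k : nat) (z' z : OK) :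
  scaled_by false m z' z -> inD R k z -> inD R k z'.
Proof.
move=> hz [[h1 h2] hN].
split; last by rewrite -hN -[LHS]/(normK z') (scaled_by_normK hz).
rewrite /totpos; case: hz => -> ->; rewrite expr0 !mul1r.
by split; apply: mulr_gt0; rewrite ?expr_eps_gt0.
Qed.

Definition mul_eps2 (z : OK) : OK := (3 * z.1 + 4 * z.2, 2 * z.1 + 3 * z.2).

Lemma eps_sqr : eps ^ 2 = 3 + 2 * s2.
Proof. by rewrite -exprnP /epsR; ring: s2_sqr. Qed.

Lemma eps_sqrN : eps ^ (-2) = 3 - 2 * s2.
Proof.
apply: (mulIf (lt0r_neq0 (expr_eps_gt0 2))).
by rewrite expr_epsNK eps_sqr; ring: s2_sqr.
Qed.

Lemma scaled_by_mul_eps2 (z : OK) : scaled_by false 2 (mul_eps2 z) z.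
Proof.
rewrite /scaled_by expr0 !mul1r eps_sqr eps_sqrN /Defs.emb /=.
by rewrite !(intrD, intrM, intrN); split; ring: s2_sqr.
Qed.

End Units.

Section Gamma.
Variable R : realType.
Local Notation s5 := (s5 R).
Local Notation eps := (epsR R).
Local Notation emb := (emb R).
Local Notation normK := (normK R).
Local Notation signed := (signed R).
Local Notation scaled_by := (scaled_by R).
Local Notation gam := (gam R).

Lemma hmat_mul_gam (j k : int) (x : OK * OK) :
  hmat R j *m gam x *m hmat R k =
  mx2 (eps ^ (2 * (j + k)) * emb x.1) (s5 * (eps ^ (2 * (j - k)) * emb x.2))
      (s5 * (eps ^ (- (2 * (j - k))) * emb (sigmaK x.2)))
      (eps ^ (- (2 * (j + k))) * emb (sigmaK x.1)).
Proof.
rewrite /hmat /gam !mulmx_mx2 !(mulrDr (2 : int)) !mulrN !opprD !opprK !expr_epsD.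
by congr mx2; ring.
Qed.

Lemma equivGP (x y : OK * OK) : equivG R x y <->
  exists (s : bool) (j k : int),
    scaled_by s (2 * (j + k)) y.1 x.1 /\ scaled_by s (2 * (j - k)) y.2 x.2.
Proof.
have s5_neq0 : s5 != 0 by rewrite gt_eqF ?s5_gt0.
rewrite /equivG; split.
  case=> j [k [s]]; rewrite hmat_mul_gam scale_mx2 => /mx2_inj [h1 h2 h3 h4].
  exists s, j, k; rewrite /scaled_by h1 h4 !mulrA; split; split=> //.
    by apply: (mulfI s5_neq0); rewrite h2; ring.
  by apply: (mulfI s5_neq0); rewrite h3; ring.
case=> s [j [k [[h1 h4] [h2 h3]]]]; exists j, k, s.
by rewrite hmat_mul_gam scale_mx2 /gam h1 h2 h3 h4; congr mx2; ring.
Qed.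

Lemma signed_true (z : OK) : signed true z <-> emb z < 0 /\ emb (sigmaK z) < 0.
Proof. by rewrite /signed expr1 !mulN1r !oppr_gt0. Qed.

Lemma admissibleP (n : nat) (x : OK * OK) : admissible R n x <->
  [/\ normK x.1 = (5 * n + 1)%:R, normK x.2 = n%:R &
      exists s, signed s x.1 /\ signed s x.2].
Proof.
rewrite /admissible /inGamma /gam det_mx2 !mxE /=.
have s5_gt0 := s5_gt0 R.
split.
  case=> hdet hsign hbc.
  have hN2 : normK x.2 = n%:R.
    apply: (mulfI (_ : (5 : R) != 0)); first by rewrite pnatr_eq0.
    by rewrite -natrM -hbc /normK; ring: (s5_sqr R).
  split=> //; first by rewrite /normK natrD -hbc; lra.
  case: hsign => [[? [? [? ?]]]|[? [? [? ?]]]].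
    exists false; rewrite !signed_false.
    by split; split; rewrite // -(pmulr_rgt0 _ s5_gt0).
  exists true; rewrite !signed_true.
  by split; split; rewrite // -(pmulr_rlt0 _ s5_gt0).
case=> hN1 hN2 [s [hx1 hx2]].
have hbc : s5 * emb x.2 * (s5 * emb (sigmaK x.2)) = (5 * n)%:R.
  by rewrite natrM -hN2 /normK; ring: (s5_sqr R).
split=> //; first by rewrite hbc -[emb x.1 * _]/(normK x.1) hN1 natrD; lra.
case: s hx1 hx2 => [/signed_true [? ?] /signed_true [? ?]|].
  by right; rewrite !pmulr_rlt0.
by move=> /signed_false [? ?] /signed_false [? ?]; left; rewrite !pmulr_rgt0.
Qed.

Lemma admissible_of_inD (n : nat) (u v : OK) :
  inD R (5 * n + 1) u -> inD R n v -> admissible R n (u, v).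
Proof.
case=> hu hNu [hv hNv]; apply/admissibleP; split=> //.
by exists false; rewrite !signed_false.
Qed.

Lemma scaled_by_equivG (s : bool) (a b m : int) (x y : OK * OK) :
  scaled_by s (2 * a) y.1 x.1 -> scaled_by s (2 * b) y.2 x.2 -> a - b = 2 * m ->
  equivG R y x.
Proof.
move=> h1 h2 hab; apply/equivGP; exists s, (- (b + m)), (- m).
have -> : 2 * (- (b + m) + - m) = - (2 * a) by lia.
have -> : 2 * (- (b + m) - - m) = - (2 * b) by lia.
by split; apply: scaled_by_sym.
Qed.

Lemma scaled_by_equivG_or_mul_eps2 (s : bool) (a b : int) (y : OK * OK) (u v : OK) :
  scaled_by s (2 * a) y.1 u -> scaled_by s (2 * b) y.2 v ->
  equivG R y (u, v) \/ equivG R y (u, mul_eps2 v).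
Proof.
move=> h1 h2; have [m [hm|hm]] := int_even_or_odd (a - b).
  by left; apply: (@scaled_by_equivG s a b m (u, v)) h1 h2 hm.
right; apply: (@scaled_by_equivG s a (b - 1) (m + 1) (u, mul_eps2 v) y h1); last by lia.
have := scaled_by_trans h2 (scaled_by_sym (scaled_by_mul_eps2 R v)).
by rewrite addbF; have -> : 2 * b + - 2 = 2 * (b - 1) by lia.
Qed.

Lemma not_equivG_mul_eps2 (u v : OK) : emb u != 0 -> emb v != 0 ->
  ~ equivG R (u, v) (u, mul_eps2 v).
Proof.
move=> u_neq0 v_neq0 /equivGP [s [j [k [h1 h2]]]].
have [_ hjk] := scaled_by_unique u_neq0 h1 (scaled_by_refl R u).
have [_ hjk'] := scaled_by_unique v_neq0 h2 (scaled_by_mul_eps2 R v).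
lia.
Qed.

Lemma inD_psi (n : nat) (x : OK * OK) : admissible R n x ->
  inD R (5 * n + 1) (psi R x).1 /\ inD R n (psi R x).2.
Proof.
case/admissibleP=> hN1 hN2 [s [hx1 hx2]].
by split; [exact: inD_absK hx1 hN1 | exact: inD_absK hx2 hN2].
Qed.

Lemma equivG_eqDD_psi (x y : OK * OK) : equivG R x y -> eqDD R (psi R x) (psi R y).
Proof.
case/equivGP=> s [j [k [h1 h2]]].
split; [apply: (@scaled_by_eqD_absK R s (- (j + k))) |
        apply: (@scaled_by_eqD_absK R s (- (j - k)))];
by rewrite mulrN; apply: scaled_by_sym.
Qed.

Lemma psi_totpos (u v : OK) : totpos R u -> totpos R v -> psi R (u, v) = (u, v).
Proof. by move=> hu hv; rewrite /psi /= !absK_id. Qed.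

Lemma psi_fibre (n : nat) (u v : OK) (y : OK * OK) :
  inD R (5 * n + 1) u -> inD R n v -> admissible R n y -> eqDD R (psi R y) (u, v) ->
  equivG R y (u, v) \/ equivG R y (u, mul_eps2 v).
Proof.
move=> [[u_gt0 _] hNu] [[v_gt0 _] hNv] /admissibleP [hN1 hN2 [s [hy1 hy2]]] [hD1 hD2].
have [a ha] := eqD_absK_scaled_by hy1 hD1 (etrans hN1 (esym hNu)) (lt0r_neq0 u_gt0).
have [b hb] := eqD_absK_scaled_by hy2 hD2 (etrans hN2 (esym hNv)) (lt0r_neq0 v_gt0).
exact: scaled_by_equivG_or_mul_eps2 ha hb.
Qed.

End Gamma.

Theorem theorem4p11 (R : realType) (n : nat) :
  (* psi lands in D_K(5n+1) x D_K(n) *)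
  (forall x : OK * OK, admissible R n x ->
     inD R (5 * n + 1) (psi R x).1 /\ inD R n (psi R x).2) /\
  (* psi is well defined on classes *)
  (forall x y : OK * OK, admissible R n x -> admissible R n y ->
     equivG R x y -> eqDD R (psi R x) (psi R y)) /\
  (* surjective *)
  (forall u v : OK, inD R (5 * n + 1) u -> inD R n v ->
     exists x, admissible R n x /\ eqDD R (psi R x) (u, v)) /\
  (* two-to-one: every fibre consists of exactly two classes *)
  (forall u v : OK, inD R (5 * n + 1) u -> inD R n v ->
     exists x1 x2 : OK * OK,
       admissible R n x1 /\ admissible R n x2 /\ ~ equivG R x1 x2 /\
       eqDD R (psi R x1) (u, v) /\ eqDD R (psi R x2) (u, v) /\
       (forall y, admissible R n y -> eqDD R (psi R y) (u, v) ->
             equivG R y x1 \/ equivG R y x2)).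
Proof.
split; first exact: inD_psi.
split; first by move=> x y _ _; apply: equivG_eqDD_psi.
split.
  move=> u v hu hv; exists (u, v).
  rewrite psi_totpos; [| by case: hu | by case: hv].
  by split; [exact: admissible_of_inD | split; apply: eqD_refl].
move=> u v hu hv; have hw := inD_scaled_by (scaled_by_mul_eps2 R v) hv.
case: (hu) (hv) (hw) => [hu_pos _] [hv_pos _] [hw_pos _].
exists (u, v), (u, mul_eps2 v); rewrite !psi_totpos //.
split; first exact: admissible_of_inD.
split; first exact: admissible_of_inD.
split.
  by case: hu_pos hv_pos => ? _ [? _]; apply: not_equivG_mul_eps2; rewrite gt_eqF.
split; first by split; apply: eqD_refl.
split.
  by split; [apply: eqD_refl | exact: (@scaled_by_eqD R 1) (scaled_by_mul_eps2 R v)].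
by move=> y; apply: psi_fibre.
Qed.
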